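(* Let $D\subseteq\{0,1,\dots,n\}$ and let $f:\mathbb{F}_2^n\to\mathbb{F}_2^n$ be a $D$-neighbor balanced bijection. Then the labeling $x\mapsto \zeta(f(x))+1$ is a $D$-magic labeling of $Q_n$.
   Context: $Q_n$ is the hypercube with vertex set $\mathbb{F}_2^n$, two vertices adjacent iff they differ in exactly one coordinate; $G_i(\boldsymbol{u})$ is the set of vertices at (Hamming) distance $i$ from $\boldsymbol{u}$ and $N_D(\boldsymbol{u})=\bigcup_{i\in D}G_i(\boldsymbol{u})$. For $\boldsymbol{a}=(a_0,\dots,a_{n-1})\in\mathbb{F}_2^n$, $\zeta(\boldsymbol{a})=\sum_{i=0}^{n-1}a_i2^i$ with $a_i\in\{0,1\}$ regarded as integers. A subset $A\subseteq\mathbb{F}_2^n$ is balanced if for every coordinate $i$, the number of $\boldsymbol{a}\in A$ with $a_i=1$ equals $|A|/2$. A bijection $f:\mathbb{F}_2^n\to\mathbb{F}_2^n$ is $D$-neighbor balanced if $f(N_D(\boldsymbol{u}))$ is balanced for every $\boldsymbol{u}\in\mathbb{F}_2^n$. A $D$-magic labeling of $Q_n$ is a bijection $g:\mathbb{F}_2^n\to\{1,\dots,2^n\}$ such that $\sum_{y\in N_D(\boldsymbol{u})}g(y)$ is the same for all $\boldsymbol{u}$. *)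

From mathcomp Require Import all_boot all_order.
Set Implicit Arguments. Unset Strict Implicit. Unset Printing Implicit Defensive.

(* Vertices of Q_n: vectors in F_2^n, represented as finite functions 'I_n -> bool. *)
Definition vert (n : nat) := {ffun 'I_n -> bool}.

Definition hdist n (u v : vert n) : nat := #|[set i | u i != v i]|.

Definition ND n (D : {set 'I_n.+1}) (u : vert n) : {set vert n} :=
  [set y : vert n | [exists i in D, hdist u y == (i : nat)]].

Definition zeta n (a : vert n) : nat := \sum_(i < n) (a i : nat) * 2 ^ i.

(* A is balanced: for each coordinate i, #{a in A | a_i = 1} = |A|/2
   (stated as 2 * #{...} = |A| to keep |A|/2 exact). *)
Definition balanced n (A : {set vert n}) : Prop :=
  forall i : 'I_n, 2 * #|[set a in A | a i]| = #|A|.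

Definition neighbor_balanced n (D : {set 'I_n.+1}) (f : vert n -> vert n) : Prop :=
  bijective f /\ forall u : vert n, balanced (f @: ND D u).

(* Bijectivity onto {1..2^n} is expressed as injectivity
   together with the range lying in {1..2^n} (equivalent by cardinality). *)
Definition magic_labeling n (D : {set 'I_n.+1}) (g : vert n -> nat) : Prop :=
  [/\ injective g,
      (forall x, 1 <= g x <= 2 ^ n) &
      exists c, forall u : vert n, \sum_(y in ND D u) g y = c].

From mathcomp Require Import all_boot all_order.
From mathcomp Require Import zify.

Set Implicit Arguments. Unset Strict Implicit. Unset Printing Implicit Defensive.

(* Summing the labels over N_D(u) coordinatewise, balancedness of f(N_D(u))
   says that bit i contributes 2^i to exactly half of the labels, so twice the
   neighbourhood sum is (2^n + 1) |N_D(u)|.  Translations x |-> x + w are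
   automorphisms of Q_n, so |N_D(u)| does not depend on u. *)

Section BalancedSum.

Variable n : nat.
Implicit Type a : vert n.

Lemma zeta_ltn a : zeta a < 2 ^ n.
Proof.
have : zeta a <= \sum_(i < n) 2 ^ i.
  by apply: leq_sum => i _; case: (a i); rewrite ?mul1n.
by rewrite -[X in _ <= X]mul1n -[1]/(2.-1) -predn_exp -ltnS prednK ?expn_gt0.
Qed.

Lemma double_sum_zeta_balanced (A : {set vert n}) :
  balanced A -> 2 * \sum_(a in A) zeta a = (2 ^ n).-1 * #|A|.
Proof.
move=> balA; rewrite predn_exp mul1n big_distrl /= /zeta exchange_big big_distrr /=.
apply: eq_bigr => i _; rewrite -(balA i) mulnCA; congr (_ * _).
rewrite -big_distrl mulnC -sum1_card big_mkcond [in RHS]big_mkcond /=; congr (_ * _).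
by apply: eq_bigr => a _; rewrite inE; case: (a \in A); case: (a i).
Qed.

End BalancedSum.

Definition vtail n (a : vert n.+1) : vert n := [ffun i => a (lift ord0 i)].

Lemma zetaS n (a : vert n.+1) : zeta a = a ord0 + 2 * zeta (vtail a).
Proof.
rewrite /zeta big_ord_recl expn0 muln1 big_distrr; congr (_ + _).
by apply: eq_bigr => i _; rewrite ffunE expnS mulnCA.
Qed.

Lemma zeta_inj n : injective (@zeta n).
Proof.
elim: n => [|n IHn] a b; first by move=> _; apply/ffunP => -[].
rewrite !zetaS => eq_ab.
have eq0 : a ord0 = b ord0 by move: eq_ab; case: (a ord0); case: (b ord0) => //=; lia.
have /IHn eq_tail : zeta (vtail a) = zeta (vtail b) by move: eq_ab; rewrite eq0; lia.
apply/ffunP => i; case: (unliftP ord0 i) => [j ->|->] //.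
by move/ffunP/(_ j): eq_tail; rewrite !ffunE.
Qed.

Section Translation.

Variable n : nat.
Implicit Types u v w y : vert n.

Definition vadd w y : vert n := [ffun i => w i (+) y i].

Lemma vaddK w : involutive (vadd w).
Proof. by move=> y; apply/ffunP => i; rewrite !ffunE addbA addbb. Qed.

Lemma hdist_vadd w u y : hdist (vadd w u) (vadd w y) = hdist u y.
Proof.
by apply: eq_card => i; rewrite !inE !ffunE; case: (w i); case: (u i); case: (y i).
Qed.

Lemma ND_vadd (D : {set 'I_n.+1}) w u : ND D (vadd w u) = vadd w @: ND D u.
Proof.
apply/setP => y; rewrite -[y](vaddK w) mem_imset; last exact: inv_inj (vaddK w).
by rewrite !inE; apply: eq_existsb => i; rewrite hdist_vadd.
Qed.

Lemma card_ND (D : {set 'I_n.+1}) u v : #|ND D u| = #|ND D v|.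
Proof.
have -> : u = vadd (vadd u v) v by apply/ffunP => i; rewrite !ffunE -addbA addbb addbF.
by rewrite ND_vadd card_imset //; exact: inv_inj (vaddK _).
Qed.

End Translation.

Lemma double_sum_label_ND n (D : {set 'I_n.+1}) f u :
  neighbor_balanced D f ->
  2 * \sum_(y in ND D u) (zeta (f y) + 1) = (2 ^ n).+1 * #|ND D u|.
Proof.
move=> [/bij_inj f_inj balf].
rewrite big_split sum1_card /= -(big_imset (@zeta n) (in2W f_inj)) /= mulnDr.
rewrite double_sum_zeta_balanced // card_imset // -mulnDl.
by rewrite addn2 prednK ?expn_gt0.
Qed.

Theorem lemma3p5 (n : nat) (D : {set 'I_n.+1}) (f : vert n -> vert n) :
  neighbor_balanced D f ->
  magic_labeling D (fun x => zeta (f x) + 1).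
Proof.
move=> balf; have f_inj := bij_inj balf.1.
split.
- by move=> x y /addIn /zeta_inj /f_inj.
- by move=> x; have := zeta_ltn (f x); lia.
exists (\sum_(y in ND D [ffun=> false]) (zeta (f y) + 1)) => u.
apply/eqP; rewrite -(eqn_pmul2l (isT : 0 < 2)) !double_sum_label_ND //.
by rewrite (card_ND D u [ffun=> false]).
Qed.
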